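(* Let $\Gamma$ be an inseparable weighted oriented graph with $n\geq 5$ vertices. Then there is a vertex $v$ of $\Gamma$ such that the induced weighted oriented graph $\Gamma[V\setminus\{v\}]$ on $n-1$ vertices is inseparable.
   Context: A weighted oriented graph $\Gamma$ with finite vertex set $V$ consists of a set of arcs, i.e. ordered pairs $(x,y)$ of distinct vertices, such that for any distinct $x,y$ at most one of $(x,y),(y,x)$ is an arc, each arc carrying a weight in $(1/2,1]$. For $Z\subseteq V$, $\Gamma[Z]$ is the induced weighted oriented graph on $Z$. A clan of $\Gamma$ is a subset $X\subseteq V$ such that for every $x\in V\setminus X$, one of the following holds: there is no arc between $x$ and any vertex of $X$; or for some weight $\alpha$, $(x,y)$ is an arc of weight $\alpha$ for all $y\in X$; or for some weight $\alpha$, $(y,x)$ is an arc of weight $\alpha$ for all $y\in X$. $\Gamma$ is separable if $V$ can be partitioned into two nonempty clans, and inseparable otherwise. *)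

From HB Require Import structures.
From mathcomp Require Import all_boot all_order all_algebra.
Set Implicit Arguments. Unset Strict Implicit. Unset Printing Implicit Defensive.
Import Order.TTheory GRing.Theory Num.Theory.
Local Open Scope ring_scope.

(* A weighted oriented graph on the finite vertex type T, weights in R.
   [arc x y] means (x,y) is an arc; [wt x y] is its weight (meaningful only
   when arc x y holds). *)
Record wograph (R : realFieldType) (T : finType) := WOGraph {
  arc : rel T;
  wt : T -> T -> R;
  arc_irr : forall x, ~~ arc x x;
  arc_asym : forall x y, arc x y -> ~~ arc y x;
  wt_range : forall x y, arc x y -> 2^-1 < wt x y <= 1
}.

Definition clan (R : realFieldType) (T : finType) (G : wograph R T)
    (S X : {set T}) : Prop :=
  X \subset S /\
  forall x, x \in S :\: X ->
    (forall y, y \in X -> ~~ arc G x y /\ ~~ arc G y x) \/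
    (exists a : R, forall y, y \in X -> arc G x y /\ wt G x y = a) \/
    (exists a : R, forall y, y \in X -> arc G y x /\ wt G y x = a).

Definition separable (R : realFieldType) (T : finType) (G : wograph R T)
    (S : {set T}) : Prop :=
  exists X Y : {set T},
    X != set0 /\ Y != set0 /\ X :&: Y = set0 /\ X :|: Y = S /\
    clan G S X /\ clan G S Y.

Definition inseparable (R : realFieldType) (T : finType) (G : wograph R T)
    (S : {set T}) : Prop := ~ separable G S.

From Pilot Require Import Defs.
From HB Require Import structures.
From mathcomp Require Import all_boot all_order all_algebra.
From Stdlib Require Import Classical.
Set Implicit Arguments. Unset Strict Implicit. Unset Printing Implicit Defensive.

(* Record each pair of vertices by the label of the arc between them (its
   direction and weight, or none); a bipartition of S into two clans is then a
   cut (X, S \ X) across which the label is constant.  Only the symmetry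
   [lab y x = rev (lab x y)] of the labelling matters.

   Shrinking the cuts
   of the graphs G - v produces a pendant p with partner q: {p} is a cut of
   G - q.  A nontrivial proper module of G would let a cut of G - y, y in the
   module, lift to a cut of G; so for a pendant p with partner q, the side of a
   cut of G - p not containing q, which is a module, is a singleton {b}, and b
   is a pendant with partner p.  Following partners backwards from a pendant
   a1 gives a1 <- a2 <- a3 <- a4.  If this closes into a 3- or 4-cycle, the
   cycle is a partner-closed set of pendants, whose complement is a module,
   hence a single vertex w, and then a cut of G - w extends to G.  Otherwise
   the labels of the four pendants force a3 to see its partner a2 with its
   own label, contradicting inseparability. *)

Section ReversibleLabelling.
Variables (T : finType) (L : Type) (lab : T -> T -> L) (rev : L -> L).
Hypothesis labC : forall x y, lab y x = rev (lab x y).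

Definition cut (S X : {set T}) (d : L) :=
  [/\ X \subset S, X != set0, S :\: X != set0 &
      forall x y, x \in X -> y \in S :\: X -> lab x y = d].

Definition module (M : {set T}) :=
  forall z m m', z \notin M -> m \in M -> m' \in M -> lab z m = lab z m'.

Definition pendant (p q : T) (e : L) :=
  p != q /\ forall z, z != p -> z != q -> lab p z = e.

Lemma setDDK (S X : {set T}) : X \subset S -> S :\: (S :\: X) = X.
Proof. by move=> sXS; rewrite setDDr setDv set0U; apply/setIidPr. Qed.

Lemma cutC S X d : cut S X d -> cut S (S :\: X) (rev d).
Proof.
case=> sXS X0 Y0 cX; rewrite /cut setDDK //; split=> //; first exact: subsetDl.
by move=> x y xY yX; rewrite labC cX.
Qed.

Lemma cut_avoid S X d v : cut S X d -> v \in S ->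
  exists Y e, cut S Y e /\ v \notin Y.
Proof.
move=> cX vS; have [vX|vX] := boolP (v \in X); last by exists X, d.
by exists (S :\: X), (rev d); split; [exact: cutC | rewrite inE vX].
Qed.

Lemma cut1_pendant p q e : cut ([set: T] :\ q) [set p] e -> pendant p q e.
Proof.
case=> /subsetP/(_ p (set11 p)); rewrite !inE andbT => pq _ _ cp.
by split=> // z zp zq; apply: cp; rewrite ?inE ?zp ?zq.
Qed.

Lemma pendant_rev p q e p' q' e' : pendant p q e -> pendant p' q' e' ->
  p' != p -> p' != q -> p != q' -> e' = rev e.
Proof.
case=> _ pe [_ p'e'] p'p p'q pq'.
by rewrite -(p'e' p) 1?(eq_sym p p') // labC pe.
Qed.

Lemma card_gt1_neq (A : {set T}) a : 1 < #|A| -> exists2 b, b \in A & b != a.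
Proof.
case/card_gt1P=> x [y [xA yA xy]].
by have [xa|] := eqVneq x a; [exists y; rewrite // -xa eq_sym | exists x].
Qed.

Lemma exists_notin (s : seq T) : size s < #|T| -> exists z, z \notin s.
Proof.
move=> sT; case: (pickP [pred z | z \notin s]) => [z zs | all_s]; first by exists z.
have: #|T| <= size s.
  apply: leq_trans (card_size s); apply: subset_leq_card; apply/subsetP => z _.
  by move: (all_s z) => /= /negbFE.
by rewrite leqNgt sT.
Qed.

Lemma cut_add_twin y y' X d : cut ([set: T] :\ y) X d -> y' \in X ->
  (forall w, w \in ([set: T] :\ y) :\: X -> lab w y = lab w y') ->
  cut [set: T] (y |: X) d.
Proof.
case=> _ _ Y0 cX y'X twin; rewrite /cut -setDDl; split=> //.
  by apply/set0Pn; exists y; rewrite setU11.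
move=> x w /setU1P [->|xX] wY; last exact: cX.
by rewrite labC twin // -labC cX.
Qed.

Lemma cut_module_split M y m X d : module M -> y \in M -> m \in M ->
  cut ([set: T] :\ y) X d -> m \in ([set: T] :\ y) :\: X -> X :\: M != set0 ->
  cut [set: T] (X :\: M) d.
Proof.
move=> modM yM mM [_ _ _ cX] mY XM0; split=> //.
  by apply/set0Pn; exists m; rewrite !inE mM /=.
move=> x w; rewrite !inE => /andP [xM xX] /andP [XMw _].
have [wM|wM] := boolP (w \in M); first by rewrite (modM x w m) // cX.
have wy : w != y by apply: contraNneq wM => ->.
by apply: cX => //; rewrite !inE wy !andbT; move: XMw; rewrite wM.
Qed.

Lemma module_cut_lift M y X d : module M -> 1 < #|M| -> M != [set: T] ->
  y \in M -> cut ([set: T] :\ y) X d -> exists Y e, cut [set: T] Y e.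
Proof.
move=> modM M2 MT yM.
have [y' y'M y'y] := card_gt1_neq y M2.
wlog y'X : X d / y' \in X => [hyp cX|].
  have [y'X|y'X] := boolP (y' \in X); first exact: hyp y'X cX.
  by apply: (hyp _ _ _ (cutC cX)); rewrite !inE y'X y'y.
move=> cX; set Y := ([set: T] :\ y) :\: X.
have [MY0|/set0Pn [m /setIP [mM mY]]] := eqVneq (M :&: Y) set0.
  exists (y |: X), d; apply: cut_add_twin cX y'X _ => w wY.
  apply: modM => //; apply/negbT.
  by move/setP/(_ w): MY0; rewrite in_setI in_set0 wY andbT.
have [XM|] := boolP (X :\: M != set0).
  by exists (X :\: M), d; exact: cut_module_split modM yM mM cX mY XM.
rewrite negbK setD_eq0 => sXM.
exists (Y :\: M), (rev d); apply: (cut_module_split modM yM y'M (cutC cX)).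
  by case: cX => sXS _ _ _; rewrite /Y setDDK.
have [z _ zM] : exists2 z, z \in [set: T] & z \notin M by apply/subsetPn; rewrite subTset.
have zX : z \notin X by apply: contra zM; apply/subsetP.
have zy : z != y by apply: contraNneq zM => ->.
by apply/set0Pn; exists z; rewrite !inE zM zX zy.
Qed.

Section Inseparable.
Hypothesis no_cut : forall X d, ~ cut [set: T] X d.
Hypothesis del_cut : forall v, exists X d, cut ([set: T] :\ v) X d.
Hypothesis card_gt4 : 4 < #|T|.

Lemma pendant_lab p q e : pendant p q e -> lab p q <> e.
Proof.
move=> [pq pe] pqe; apply: (no_cut (X := [set p]) (d := e)); split.
- exact: subsetT.
- by apply/set0Pn; exists p; rewrite set11.
- by apply/set0Pn; exists q; rewrite !inE eq_sym pq.
move=> x z; rewrite !inE andbT => /eqP -> zp.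
by have [->|zq] := eqVneq z q; last exact: pe.
Qed.

Lemma pendant_uniq p q q' e e' : pendant p q e -> pendant p q' e' -> q = q'.
Proof.
move=> Pq Pq'; have [//|qq'] := eqVneq q q'; exfalso.
have [z] : exists z, z \notin [:: p; q; q'] by apply: exists_notin; apply: ltnW.
rewrite !inE !negb_or => /and3P [zp zq zq'].
apply: (pendant_lab Pq'); case: Pq Pq' => _ pe [pq' pe'].
by rewrite (pe q') 1?eq_sym // -(pe z) // pe'.
Qed.

Lemma pendant_cut p q e S X d : pendant p q e -> cut S X d ->
  p \in X -> q \in S :\: X -> S :\: X = [set q].
Proof.
move=> Pp [_ _ _ cX] pX qY; apply/setP => y; rewrite inE.
apply/idP/eqP => [yY|->//]; have [//|yq] := eqVneq y q.
exfalso; apply: (pendant_lab Pp).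
have yp : y != p by apply: contraTneq yY => ->; rewrite inE pX.
by rewrite (cX p q pX qY) -(cX p y pX yY); case: Pp => _; apply.
Qed.

Lemma module_trivial M : module M -> M != [set: T] -> #|M| <= 1.
Proof.
move=> modM MT; rewrite leqNgt; apply/negP => M2.
have [y yM] : exists y, y \in M by apply/card_gt0P; exact: ltnW.
have [X [d cX]] := del_cut y.
by have [Y [e cY]] := module_cut_lift modM M2 MT yM cX; exact: no_cut cY.
Qed.

Lemma cut_disjoint_absurd v u X B c e :
  cut ([set: T] :\ v) X c -> cut ([set: T] :\ u) B e ->
  u \in X -> v \notin B -> 1 < #|X| -> X :&: B = set0 -> False.
Proof.
move=> [sXv _ _ cX] [_ B0 _ cB] uX vB X2 XB0.
have notXB z : z \in X -> z \notin B.
  by move=> zX; move/setP/(_ z): XB0; rewrite in_setI in_set0 zX /= => ->.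
have [x xX xu] := card_gt1_neq u X2.
have /set0Pn [b bB] := B0.
have bX : b \notin X by apply: contraTN bB => /notXB.
have bv : b != v by apply: contraNneq vB => <-.
have erc : e = rev c.
  have xY : x \in ([set: T] :\ u) :\: B by rewrite !inE xu notXB.
  have bY : b \in ([set: T] :\ v) :\: X by rewrite !inE bX bv.
  by rewrite -(cB b x bB xY) labC (cX x b xX bY).
apply: (no_cut (X := B) (d := e)); split=> //.
  by apply/set0Pn; exists u; rewrite !inE andbT; apply: notXB.
move=> z w zB; rewrite !inE andbT => wB.
have [->|wu] := eqVneq w u; last by apply: cB; rewrite // !inE wB wu.
have zv : z != v by apply: contraNneq vB => <-.
rewrite labC (cX u z) // !inE zv !andbT; apply: contraTN zB; exact: notXB.
Qed.

Lemma cut_meet v u X B c e b a :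
  cut ([set: T] :\ v) X c -> cut ([set: T] :\ u) B e -> u \in X -> v \notin B ->
  b \in X :&: B -> a \in (([set: T] :\ u) :\: B) :\: (v |: X) ->
  cut ([set: T] :\ u) (X :&: B) c.
Proof.
move=> [sXv _ _ cX] [sBu _ _ cB] uX vB /setIP [bX bB] aZ.
have uv : u != v by have := subsetP sXv u uX; rewrite !inE andbT.
have ec : e = c.
  have /setDP [aY /setU1P aVX] := aZ.
  have av : a != v by apply/eqP => av; apply: aVX; left.
  have aX : a \notin X by apply/negP => aX; apply: aVX; right.
  by rewrite -(cB b a bB aY) (cX b a bX) // !inE aX av.
split.
- exact: subset_trans (subsetIr X B) sBu.
- by apply/set0Pn; exists b; rewrite inE bX bB.
- by apply/set0Pn; exists v; rewrite !inE (negbTE vB) eq_sym uv andbF.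
move=> x w /setIP [xX xB]; rewrite !inE andbT => /andP [XBw wu].
have [wB|wB] := boolP (w \in B); last by rewrite -ec; apply: cB; rewrite // !inE wB wu.
have wv : w != v by apply: contraNneq vB => <-.
by rewrite cX // !inE wv !andbT; move: XBw; rewrite wB andbT.
Qed.

Lemma del_cut_shrink v X c : cut ([set: T] :\ v) X c -> 1 < #|X| ->
  exists u Y e, cut ([set: T] :\ u) Y e /\ #|Y| < #|X|.
Proof.
move=> cX X2; have [sXv X0 _ _] := cX.
have /set0Pn [u uX] := X0.
have vu : v \in [set: T] :\ u.
  by have := subsetP sXv u uX; rewrite !inE !andbT eq_sym.
have [B0 [e0 cB0]] := del_cut u; have [B [e [cB vB]]] := cut_avoid cB0 vu.
have [sBu _ _ _] := cB.
have [XB0|/set0Pn [b bXB]] := eqVneq (X :&: B) set0.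
  by case: (cut_disjoint_absurd cX cB uX vB X2 XB0).
have uB : u \notin B by apply/negP => /(subsetP sBu); rewrite !inE eqxx.
set Z := ([set: T] :\ u) :\: B.
have [/set0Pn [a aZ]|] := boolP (Z :\: (v |: X) != set0).
  exists u, (X :&: B), c; split; first exact: cut_meet cX cB uX vB bXB aZ.
  apply: proper_card; rewrite properEneq subsetIl andbT.
  by apply/negP => /eqP XBX; move: uX; rewrite -XBX => /setIP [_]; apply/negP.
rewrite negbK setD_eq0 => sZ.
exists u, Z, (rev e); split; first exact: cutC.
have /setIP [bX bB] := bXB.
have bu : b != u by apply: contraNneq uB => <-.
have sZ' : Z \subset v |: ((X :\ u) :\ b).
  apply/subsetP => z zZ; have /setU1P [->|zX] := subsetP sZ z zZ; first exact: setU11.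
  move: zZ; rewrite !inE zX => /andP [zB /andP [zu _]].
  have zb : z != b by apply: contraNneq zB => ->.
  by rewrite zb zu orbT.
have := subset_leq_card sZ'; rewrite cardsU1 (cardsD1 u X) uX (cardsD1 b (X :\ u)).
rewrite !inE bu bX => /leq_ltn_trans; apply.
by rewrite ltnS leq_add2r leq_b1.
Qed.

Lemma exists_pendant : exists p q e, pendant p q e.
Proof.
have /card_gt0P [v _] : 0 < #|T| by apply: leq_trans card_gt4.
have [X [c cX]] := del_cut v.
have [n] := ubnP #|X|; elim: n => // n IH in v X c cX *; rewrite ltnS => Xn.
have [X2|X1] := ltnP 1 #|X|.
  have [u [Y [e [cY YX]]]] := del_cut_shrink cX X2.
  exact: IH cY (leq_trans YX Xn).
have [p Xp] : exists p, X = [set p].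
  by apply/cards1P; rewrite eqn_leq X1 card_gt0; case: cX.
by exists p, v, c; apply: cut1_pendant; rewrite -Xp.
Qed.

Lemma pendant_pred p q e : pendant p q e -> exists b f, b != q /\ pendant b p f.
Proof.
move=> [pq pe].
have qp : q \in [set: T] :\ p by rewrite !inE eq_sym pq.
have [B0 [f0 cB0]] := del_cut p; have [B [f [cB qB]]] := cut_avoid cB0 qp.
have [sBp B0' _ cBf] := cB.
have pB : p \notin B by apply/negP => /(subsetP sBp); rewrite !inE eqxx.
have modB : module B.
  move=> z m m' zB mB m'B; have [->|zp] := eqVneq z p.
    have notpq y : y \in B -> y != p /\ y != q.
      by move=> yB; split; [apply: contraTneq yB | apply: contraTneq yB] => ->.
    by have [mp mq] := notpq m mB; have [m'p m'q] := notpq m' m'B; rewrite !pe.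
  by rewrite (labC m z) (labC m' z) !cBf // !inE zB zp.
have [b Bb] : exists b, B = [set b].
  apply/cards1P; rewrite eqn_leq card_gt0 B0' andbT; apply: module_trivial modB _.
  by apply: contraNneq pB => ->.
exists b, f; split; first by apply: contraNneq qB => <-; rewrite Bb set11.
by apply: cut1_pendant; rewrite -Bb.
Qed.

Lemma pendant_closed_absurd (C : {set T}) : C != set0 -> C != [set: T] ->
  (forall c, c \in C -> exists q e, q \in C /\ pendant c q e) -> False.
Proof.
move=> C0 CT closedC.
have modC : module (~: C).
  move=> z m m'; rewrite !inE negbK => zC mC m'C.
  have [q [e [qC [_ ze]]]] := closedC z zC.
  have notzq y : y \notin C -> y != z /\ y != q.
    by move=> yC; split; [apply: contraTneq zC | apply: contraTneq qC] => <-.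
  by have [mz mq] := notzq m mC; have [m'z m'q] := notzq m' m'C; rewrite !ze.
have [w Cw] : exists w, ~: C = [set w].
  apply/cards1P; rewrite eqn_leq card_gt0 module_trivial //=.
    by apply: contraNneq CT => C'0; rewrite -[C]setCK C'0 setC0.
  by apply: contraNneq C0 => C'T; rewrite -[C]setCK C'T setCT.
have inC z : (z \in C) = (z != w) by rewrite -[z \in C]negbK -in_setC Cw in_set1.
have [A [d cA]] := del_cut w; have [sAw A0 B0 cAB] := cA.
have AC x : x \in A -> x \in C by move/(subsetP sAw); rewrite inC !inE andbT.
have partnerA x q e : x \in A -> q \in C -> pendant x q e -> q \in A.
  move=> xA qC Px; apply: contraT => qA.
  have qB : q \in ([set: T] :\ w) :\: A by rewrite !inE qA -inC qC.
  have Pqw : pendant q w (rev d).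
    by apply: cut1_pendant; rewrite -(pendant_cut Px cA xA qB); exact: cutC.
  have [q' [e' [q'C Pq']]] := closedC q qC.
  by move: q'C; rewrite (pendant_uniq Pq' Pqw) inC eqxx.
have /set0Pn [b bB] := B0.
apply: (no_cut (X := A) (d := d)); split=> //.
  by apply/set0Pn; exists w; rewrite !inE andbT; apply: contraTN isT => /AC; rewrite inC eqxx.
move=> x y xA; rewrite !inE andbT => yA.
have [q [e [qC Px]]] := closedC x (AC x xA).
have qA := partnerA x q e xA qC Px; case: Px => _ xe.
have notA z : z \notin A -> z != x /\ z != q.
  by move=> zA; split; [apply: contraTneq xA | apply: contraTneq qA] => <-.
have ed : e = d.
  have /setDP [_ bA] := bB; have [bx bq] := notA b bA.
  by rewrite -(cAB x b xA bB) xe.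
have [->|yw] := eqVneq y w; last by apply: cAB; rewrite // !inE yA yw.
have wx : w != x by rewrite eq_sym -inC AC.
have wq : w != q by rewrite eq_sym -inC.
by rewrite xe.
Qed.

Lemma pendant_path_absurd a0 a1 a2 a3 a4 e1 e2 e3 e4 :
  pendant a1 a0 e1 -> pendant a2 a1 e2 -> pendant a3 a2 e3 -> pendant a4 a3 e4 ->
  a3 != a1 -> a3 != a0 -> a4 != a2 -> a4 != a1 -> a4 != a0 -> False.
Proof.
move=> P1 P2 P3 P4 a31 a30 a42 a41 a40.
have [[a21 _] [a32 _]] := (P2, P3).
have e31 : e3 = rev e1 by apply: pendant_rev P1 P3 _ _ _; rewrite // eq_sym.
have e41 : e4 = rev e1 by apply: pendant_rev P1 P4 _ _ _; rewrite // eq_sym.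
have e42 : e4 = rev e2 by apply: pendant_rev P2 P4 _ _ _; rewrite // eq_sym.
apply: (pendant_lab P3); rewrite labC e31 -e41 e42.
by case: P2 => _ ->; rewrite // eq_sym.
Qed.

Lemma del_cut_absurd : False.
Proof.
have [a1 [a0 [e1 P1]]] := exists_pendant.
have [a2 [e2 [a20 P2]]] := pendant_pred P1.
have [a3 [e3 [a31 P3]]] := pendant_pred P2.
have [a4 [e4 [a42 P4]]] := pendant_pred P3.
have cycle_absurd (s : seq T) : size s <= 4 -> a1 \in s ->
    (forall c, c \in s -> exists q e, q \in s /\ pendant c q e) -> False.
  move=> s4 s1 closed_s; have [z zs] := exists_notin (leq_ltn_trans s4 card_gt4).
  apply: (pendant_closed_absurd (C := [set x in s])).
  - by apply/set0Pn; exists a1; rewrite inE.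
  - by apply/negP => /eqP/setP/(_ z); rewrite !inE (negbTE zs).
  by move=> c; rewrite inE => /closed_s [q [e [qs Pc]]]; exists q, e; rewrite inE.
have a30 : a3 != a0.
  apply/eqP => a30; subst a0; apply: (cycle_absurd [:: a1; a2; a3]); rewrite ?inE ?eqxx //.
  move=> c; rewrite !inE => /or3P [] /eqP ->.
  - by exists a3, e1; rewrite !inE eqxx !orbT.
  - by exists a1, e2; rewrite !inE eqxx.
  - by exists a2, e3; rewrite !inE eqxx !orbT.
have a41 : a4 != a1.
  by apply: contraNneq a30 => a41; subst a4; rewrite (pendant_uniq P1 P4).
have a40 : a4 != a0.
  apply/eqP => a40; subst a0; apply: (cycle_absurd [:: a1; a2; a3; a4]); rewrite ?inE ?eqxx //.
  move=> c; rewrite !inE => /or4P [] /eqP ->.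
  - by exists a4, e1; rewrite !inE eqxx !orbT.
  - by exists a1, e2; rewrite !inE eqxx.
  - by exists a2, e3; rewrite !inE eqxx !orbT.
  - by exists a3, e4; rewrite !inE eqxx !orbT.
exact: pendant_path_absurd P1 P2 P3 P4 a31 a30 a42 a41 a40.
Qed.

End Inseparable.

End ReversibleLabelling.

Section WeightedOrientedGraph.
Variables (R : realFieldType) (T : finType) (G : wograph R T).

Definition arc_label (x y : T) : option (bool * R) :=
  if Defs.arc G x y then Some (true, wt G x y)
  else if Defs.arc G y x then Some (false, wt G y x) else None.

Definition rev_label (l : option (bool * R)) : option (bool * R) :=
  omap (fun bw => (~~ bw.1, bw.2)) l.

Lemma arc_labelC x y : arc_label y x = rev_label (arc_label x y).
Proof.
rewrite /arc_label; case xy: (Defs.arc G x y); case yx: (Defs.arc G y x) => //.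
by have := arc_asym xy; rewrite yx.
Qed.

Lemma arc_uniformP (X : {set T}) x :
  ((forall y, y \in X -> ~~ Defs.arc G x y /\ ~~ Defs.arc G y x) \/
   (exists a : R, forall y, y \in X -> Defs.arc G x y /\ wt G x y = a) \/
   (exists a : R, forall y, y \in X -> Defs.arc G y x /\ wt G y x = a)) <->
  exists l, forall y, y \in X -> arc_label x y = l.
Proof.
split.
- case=> [H|[[a H]|[a H]]];
    [exists None | exists (Some (true, a)) | exists (Some (false, a))] => y /H;
    rewrite /arc_label.
  + by case=> /negbTE -> /negbTE ->.
  + by case=> -> ->.
  + by case=> yx ->; rewrite yx (negbTE (arc_asym yx)).
- case=> [[[[] a]|] H]; [right; left | right; right | left]; try exists a;
    move=> y /H; rewrite /arc_label.
  + by case: (Defs.arc G x y) => [[->]|] //; case: (Defs.arc G y x).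
  + by case: (Defs.arc G x y) => //; case: (Defs.arc G y x) => // [[->]].
  + by case: (Defs.arc G x y) => //; case: (Defs.arc G y x).
Qed.

Lemma clanP S X : clan G S X <->
  X \subset S /\ forall x, x \in S :\: X -> exists l, forall y, y \in X -> arc_label x y = l.
Proof. by split=> -[sXS H]; split=> // x /H /arc_uniformP. Qed.

Lemma separableP S : separable G S <-> exists X d, cut arc_label S X d.
Proof.
split.
- case=> X [Y [X0 [Y0 [XY0 [XYS [/clanP [_ cX] /clanP [_ cY]]]]]]].
  have /set0Pn [x0 x0X] := X0; have /set0Pn [y0 y0Y] := Y0.
  have disjXY : [disjoint X & Y] by rewrite -setI_eq0 XY0.
  have XE : S :\: Y = X by rewrite -XYS setDUl setDv setU0; apply/setDidPl.
  have YE : S :\: X = Y.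
    by rewrite -XYS setDUl setDv set0U; apply/setDidPl; rewrite disjoint_sym.
  exists X, (arc_label x0 y0); split=> //; rewrite ?YE //; first by rewrite -XYS subsetUl.
  move=> x y xX yY.
  have xSY : x \in S :\: Y by rewrite XE.
  have y0SX : y0 \in S :\: X by rewrite YE.
  have [[l Hl] [l' Hl']] := (cY x xSY, cX y0 y0SX).
  by rewrite (Hl y yY) -(Hl y0 y0Y) (arc_labelC y0 x) (Hl' x xX) -(Hl' x0 x0X) -arc_labelC.
- case=> X [d [sXS X0 Y0 cX]]; exists X, (S :\: X); split=> //; split=> //.
  split; first by rewrite setDE setICA setICr setI0.
  split; first by rewrite -{2}(setID S X) (setIidPr sXS).
  split; apply/clanP.
  + split=> // x xY; exists (rev_label d) => y yX.
    by rewrite arc_labelC cX.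
  + split=> [|x]; first exact: subsetDl.
    by rewrite setDDK // => xX; exists d => y; apply: cX.
Qed.

End WeightedOrientedGraph.

Theorem theorem3p3 (R : realFieldType) (T : finType) (G : wograph R T) :
  (5 <= #|T|)%N -> inseparable G [set: T] ->
  exists v : T, inseparable G ([set: T] :\ v).
Proof.
move=> card_gt4 insT; apply: NNPP => no_v.
apply: (del_cut_absurd (@arc_labelC _ _ G) _ _ card_gt4).
- by move=> X d cT; apply: insT; apply/separableP; exists X, d.
- by move=> v; apply/separableP; apply: NNPP => insv; apply: no_v; exists v.
Qed.
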